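(* Let $\mathcal{A}=\{H_1,\dots,H_n\}$ be a central arrangement in $\mathbb{Q}^l$ with $H_i=\alpha_i^{-1}(0)$, where the $\alpha_i\in S_\mathbb{Z}=\mathbb{Z}[x_1,\dots,x_l]$ are linear forms such that no prime number divides any $\alpha_i$; regard it as the multiarrangement $(\mathcal{A},\mathbf{1})$ with all multiplicities $1$. Let $Q(\mathcal{A})=\prod_i\alpha_i$ and let $J(\mathcal{A})_\mathbb{Z}$ be the ideal of $S_\mathbb{Z}$ generated by $Q(\mathcal{A})$ and its partial derivatives $\partial Q(\mathcal{A})/\partial x_j$, $j=1,\dots,l$. Let $p$ be a good prime for $\mathcal{A}$. Then $p$ is a zero divisor of $S_\mathbb{Z}/J(\mathcal{A})_\mathbb{Z}$ if and only if $p$ is a zero divisor of $\operatorname{coker}(\varphi_\mathbb{Z})$.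
   Context: $\pi_p$ is reduction mod $p$ on $S_\mathbb{Z}$; $p$ is good if $\pi_p(\alpha_i)\ne\pi_p(\alpha_j)$ for all $i\ne j$. Let $M\subseteq S_\mathbb{Z}^n$ be the submodule generated by $\alpha_ie_i$, $i=1,\dots,n$, $A(\mathcal{A})=(\partial\alpha_i/\partial x_j)_{i,j}$, and $\varphi_\mathbb{Z}\colon S_\mathbb{Z}^l\to S_\mathbb{Z}^n/M$, $(g_1,\dots,g_l)^t\mapsto A(\mathcal{A})(g_1,\dots,g_l)^t$. $p$ is a zero divisor of an $S_\mathbb{Z}$-module $N$ if $pv=0$ for some nonzero $v\in N$. *)

From HB Require Import structures.
From mathcomp Require Import all_boot all_order all_algebra.
From mathcomp.multinomials Require Import mpoly.
Set Implicit Arguments. Unset Strict Implicit. Unset Printing Implicit Defensive.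
Import GRing.Theory.
Local Open Scope ring_scope.

Definition linear_form (l : nat) (a : {mpoly int[l]}) : Prop :=
  exists c : 'I_l -> int, a = \sum_(j < l) c j *: 'X_j.

Definition hyperplane (l : nat) (a : {mpoly int[l]}) : (('I_l -> rat) -> Prop) :=
  fun v => meval v (map_mpoly (fun z : int => z%:~R : rat) a) = 0.

Definition divides_in_SZ (l : nat) (q : int) (f : {mpoly int[l]}) : Prop :=
  exists g : {mpoly int[l]}, f = q%:MP * g.

Definition red_mod (p l : nat) (f : {mpoly int[l]}) : {mpoly 'F_p[l]} :=
  map_mpoly (fun z : int => z%:~R : 'F_p) f.

Definition good_prime (p l n : nat) (alpha : 'I_n -> {mpoly int[l]}) : Prop :=
  forall i j : 'I_n, i != j -> red_mod p (alpha i) != red_mod p (alpha j).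

Definition defpoly (l n : nat) (alpha : 'I_n -> {mpoly int[l]}) : {mpoly int[l]} :=
  \prod_(i < n) alpha i.

Definition in_J (l n : nat) (alpha : 'I_n -> {mpoly int[l]}) (f : {mpoly int[l]}) : Prop :=
  exists (h : {mpoly int[l]}) (hs : 'I_l -> {mpoly int[l]}),
    f = h * defpoly alpha + \sum_(j < l) hs j * (defpoly alpha)^`M(j).

Definition zero_divisor_quotJ (p l n : nat) (alpha : 'I_n -> {mpoly int[l]}) : Prop :=
  exists f : {mpoly int[l]}, ~ in_J alpha f /\ in_J alpha ((p%:R : {mpoly int[l]}) * f).

(* membership in M + im(A(A)) inside S_Z^n, where M is generated by
   alpha_i e_i and A(A) = (d alpha_i / d x_j)_{i,j} : S_Z^l -> S_Z^n.
   Then coker(phi_Z) = S_Z^n / (M + im A(A)). *)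
Definition in_M_plus_im (l n : nat) (alpha : 'I_n -> {mpoly int[l]})
    (w : 'I_n -> {mpoly int[l]}) : Prop :=
  exists (c : 'I_n -> {mpoly int[l]}) (g : 'I_l -> {mpoly int[l]}),
    forall i : 'I_n,
      w i = c i * alpha i + \sum_(j < l) (alpha i)^`M(j) * g j.

Definition zero_divisor_coker (p l n : nat) (alpha : 'I_n -> {mpoly int[l]}) : Prop :=
  exists w : 'I_n -> {mpoly int[l]},
    ~ in_M_plus_im alpha w /\
    in_M_plus_im alpha (fun i => (p%:R : {mpoly int[l]}) * w i).

(* Let Q_i = prod_(k != i) alpha_k and psi(w) = sum_i w_i Q_i.  By the Leibniz
   rule, psi maps M + im A(A) onto J(A)_Z, and its kernel lies in M: primitive
   linear forms are prime in S_Z (Gauss' lemma), and distinct hyperplanes give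
   non-associate ones.  So coker(phi_Z) embeds into S_Z/J(A)_Z, and p-torsion of
   the former is p-torsion of the latter.
   Conversely, let f be outside J with p f = psi(v), v in M + im A.  If the
   reductions of the alpha_i mod p are pairwise non-proportional, the same
   argument over F_p shows that alpha_i divides v_i mod p; writing
   v_i = d_i alpha_i + p u_i forces p | sum_i d_i, so f = s Q + psi(u), and
   w = u + s alpha_i0 e_i0 is a nonzero p-torsion element of coker(phi_Z).  If two
   reductions are proportional, coker(phi_Z) has p-torsion anyway, built from
   the 2x2 minors of the coefficient vectors. *)

From HB Require Import structures.
From mathcomp Require Import all_boot all_order all_algebra.
From mathcomp.multinomials Require Import mpoly.
From mathcomp Require Import ring boolp.
Set Implicit Arguments. Unset Strict Implicit. Unset Printing Implicit Defensive.
Import GRing.Theory.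
Local Open Scope ring_scope.

Section Divisibility.
Variable R : comPzRingType.
Implicit Types a b c x y : R.

Definition dvdr a b : Prop := exists c, b = a * c.

Definition prime_elt a : Prop :=
  ~ dvdr a 1 /\ forall b c, dvdr a (b * c) -> dvdr a b \/ dvdr a c.

Lemma dvdr0 a : dvdr a 0.
Proof. by exists 0; rewrite mulr0. Qed.

Lemma dvdrr a : dvdr a a.
Proof. by exists 1; rewrite mulr1. Qed.

Lemma dvdrD a b c : dvdr a b -> dvdr a c -> dvdr a (b + c).
Proof. by move=> [b' ->] [c' ->]; exists (b' + c'); rewrite mulrDr. Qed.

Lemma dvdrN a b : dvdr a b -> dvdr a (- b).
Proof. by move=> [b' ->]; exists (- b'); rewrite mulrN. Qed.

Lemma dvdr_mulr a b c : dvdr a b -> dvdr a (b * c).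
Proof. by move=> [b' ->]; exists (b' * c); rewrite mulrA. Qed.

Lemma dvdr_mull a b c : dvdr a c -> dvdr a (b * c).
Proof. by rewrite mulrC; apply: dvdr_mulr. Qed.

Lemma dvdr_sum a (I : Type) (r : seq I) (P : pred I) (F : I -> R) :
  (forall i, P i -> dvdr a (F i)) -> dvdr a (\sum_(i <- r | P i) F i).
Proof. by move=> aF; apply: big_ind => //; [apply: dvdr0 | apply: dvdrD]. Qed.

Lemma dvdr_subM a x y x' y' :
  dvdr a (x - y) -> dvdr a (x' - y') -> dvdr a (x * x' - y * y').
Proof.
move=> dxy dxy'; have -> : x * x' - y * y' = (x - y) * x' + y * (x' - y') by ring.
by apply: dvdrD; [apply: dvdr_mulr | apply: dvdr_mull].
Qed.

Lemma dvdr_sub_prod a (I : Type) (r : seq I) (P : pred I) (F G : I -> R) :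
  (forall i, P i -> dvdr a (F i - G i)) ->
  dvdr a (\prod_(i <- r | P i) F i - \prod_(i <- r | P i) G i).
Proof.
move=> dFG; apply: (big_ind2 (fun x y => dvdr a (x - y))) => //.
  by rewrite subrr; apply: dvdr0.
exact: dvdr_subM.
Qed.

Lemma dvdr_subX a x y k : dvdr a (x - y) -> dvdr a (x ^+ k - y ^+ k).
Proof.
move=> dxy; elim: k => [|k IH]; first by rewrite !expr0 subrr; apply: dvdr0.
by rewrite !exprS; apply: dvdr_subM.
Qed.

Lemma prime_dvdr_prod a (I : Type) (r : seq I) (P : pred I) (F : I -> R) :
  prime_elt a -> dvdr a (\prod_(i <- r | P i) F i) -> exists2 i, P i & dvdr a (F i).
Proof.
move=> [a_ndvd1 a_pr]; elim/big_rec: _ => [/a_ndvd1[] |i x Pi IH /a_pr[]].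
  by exists i.
exact: IH.
Qed.

Lemma dvdr_cofactor_relation (I : finType) (a v : I -> R) i :
  prime_elt (a i) -> (forall k, k != i -> ~ dvdr (a i) (a k)) ->
  \sum_k v k * \prod_(k' | k' != k) a k' = 0 -> dvdr (a i) (v i).
Proof.
move=> ai_pr ai_ndvd rel.
have dvd_vQ : dvdr (a i) (v i * \prod_(k' | k' != i) a k').
  move/eqP: rel; rewrite (bigD1 i) //= addr_eq0 => /eqP ->.
  apply/dvdrN/dvdr_sum => k ki; apply: dvdr_mull.
  by rewrite (bigD1 i) 1?eq_sym //=; apply/dvdr_mulr/dvdrr.
have [//|/(prime_dvdr_prod ai_pr) [k ki]] := ai_pr.2 _ _ dvd_vQ.
by move=> /(ai_ndvd _ ki).
Qed.

End Divisibility.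

Section LinearForms.
Variables (R : nzRingType) (l : nat).
Implicit Types c d : 'I_l -> R.

Definition linform c : {mpoly R[l]} := \sum_j c j *: 'X_j.

Lemma mcoeff_linformU c k : (linform c)@_U_(k) = c k.
Proof.
rewrite /linform raddf_sum (bigD1 k) //= mcoeffZ mcoeffXU eqxx mulr1 big1 ?addr0 //.
by move=> j /negPf jk; rewrite mcoeffZ mcoeffXU jk mulr0.
Qed.

Lemma mcoeff_linform0 c : (linform c)@_0 = 0.
Proof.
rewrite /linform raddf_sum /= big1 // => j _; rewrite mcoeffZ mcoeffX.
suff /negPf -> : (U_(j) != 0 :> 'X_{1..l})%MM by rewrite mulr0.
by rewrite -mdeg_eq0 mdeg1.
Qed.

Lemma msize_linform c : linform c != 0 -> msize (linform c) = 2.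
Proof.
move=> nz; apply/anti_leq/andP; split.
  apply: (leq_trans (msize_sum _ _ _)); apply/bigmax_leqP => j _.
  by apply: (leq_trans (msizeZ_le _ _)); rewrite msizeX mdeg1.
rewrite ltnNge; apply: contra nz => /msize1_polyC ->.
by rewrite mcoeff_linform0.
Qed.

Lemma linform_coef_neq0 c : linform c != 0 -> exists j, c j != 0.
Proof.
apply: contra_neqP => /forallNP c0; rewrite /linform big1 // => j _.
by move/negP/negbNE/eqP: (c0 j) => ->; rewrite scale0r.
Qed.

Lemma mderiv_linform c j : (linform c)^`M(j) = (c j)%:MP.
Proof.
rewrite /linform raddf_sum (bigD1 j) //= big1 ?addr0 => [|k /negPf kj]; last first.
  by rewrite mderivZ mderivX mnm1E kj scale0r scaler0.
rewrite mderivZ mderivX mnm1E eqxx -[X in (X - _)%MM]add0m addmK mpolyX0.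
by rewrite scale1r alg_mpolyC.
Qed.

End LinearForms.

Lemma map_linform (R S : nzRingType) l (f : {rmorphism R -> S}) (c : 'I_l -> R) :
  map_mpoly f (linform c) = linform (f \o c).
Proof.
by rewrite /linform rmorph_sum; apply: eq_bigr => j _ /=; rewrite map_mpolyZ map_mpolyX.
Qed.

Lemma linform_dvdrC (R : comNzRingType) l (c : 'I_l -> R) x :
  dvdr (linform c) x%:MP -> x = 0.
Proof.
move=> [h /(congr1 (mcoeff 0%MM))].
by rewrite mcoeffC eqxx mulr1 (mcoeff0_is_multiplicative _ _).1 mcoeff_linform0 mul0r.
Qed.

Lemma linform_ndvd1 (R : comNzRingType) l (c : 'I_l -> R) : ~ dvdr (linform c) 1.
Proof. by rewrite -mpolyC1 => /linform_dvdrC /eqP; rewrite oner_eq0. Qed.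

Lemma linear_formE l (a : {mpoly int[l]}) :
  linear_form a -> a = linform (fun j => a@_U_(j)).
Proof. by move=> [c ->]; apply: eq_bigr => j _; rewrite mcoeff_linformU. Qed.

Lemma linform_dvd_const (R : idomainType) l (c d : 'I_l -> R) (h : {mpoly R[l]}) :
  linform c != 0 -> linform d = linform c * h -> h = (h@_0)%:MP.
Proof.
move=> c_nz dE; have [->|h_nz] := eqVneq h 0; first by rewrite mcoeff0.
apply: msize1_polyC; have d_nz : linform d != 0 by rewrite dE mulf_neq0.
have := msize_linform d_nz; rewrite dE msizeM // msize_linform //.
by case: (msize h) => [|[|k]].
Qed.

Section LinearFormOverField.
Variables (K : fieldType) (l : nat) (c : 'I_l -> K) (j0 : 'I_l).
Hypothesis c_j0 : c j0 != 0.

(* Solving [linform c = 0] for [x_j0] gives a substitution that kills the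
   form and is the identity modulo it. *)
Let subst : l.-tuple {mpoly K[l]} :=
  [tuple if i == j0 then 'X_i - (c j0)^-1 *: linform c else 'X_i | i < l].

Let substX i :
  'X_i \mPo subst = if i == j0 then 'X_i - (c j0)^-1 *: linform c else 'X_i.
Proof. by rewrite comp_mpolyXU -tnth_nth tnth_mktuple. Qed.

Let subst_linform : linform c \mPo subst = 0.
Proof.
rewrite [X in X \mPo _]/linform raddf_sum /=.
under eq_bigr => j _ do rewrite comp_mpolyZ substX.
rewrite (bigD1 j0) //= eqxx scalerBr scalerA mulfV // scale1r.
under eq_bigr => j j_neq do rewrite (negPf j_neq).
by rewrite /linform (bigD1 j0) //= opprD addrA subrr sub0r addNr.
Qed.

Let dvdr_sub_subst f : dvdr (linform c) (f - (f \mPo subst)).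
Proof.
rewrite {1}(mpolyE f) comp_mpolyEX -sumrB; apply: dvdr_sum => m _.
rewrite -scalerBr -mul_mpolyC; apply: dvdr_mull.
rewrite comp_mpolyX mpolyXE_id; apply: dvdr_sub_prod => i _; apply: dvdr_subX.
rewrite tnth_mktuple; case: eqP => _; last by rewrite subrr; apply: dvdr0.
by exists ((c j0)^-1)%:MP; rewrite opprB addrC subrK mulrC mul_mpolyC.
Qed.

Lemma linform_prime_at : prime_elt (linform c).
Proof.
split=> [|f g [h fgE]]; first exact: linform_ndvd1.
have : (f \mPo subst) * (g \mPo subst) = 0.
  by rewrite -rmorphM /= fgE rmorphM /= subst_linform mul0r.
move/eqP; rewrite mulf_eq0 => /orP[] /eqP subst0.
  by left; have := dvdr_sub_subst f; rewrite subst0 subr0.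
by right; have := dvdr_sub_subst g; rewrite subst0 subr0.
Qed.

End LinearFormOverField.

Lemma linform_prime (K : fieldType) l (c : 'I_l -> K) :
  linform c != 0 -> prime_elt (linform c).
Proof. by case/linform_coef_neq0 => j0; apply: linform_prime_at. Qed.

HB.instance Definition _ (p l : nat) :=
  GRing.RMorphism.copy (@red_mod p l) (map_mpoly (intr : int -> 'F_p)).

Lemma divides_in_SZE l (q : nat) (f : {mpoly int[l]}) :
  divides_in_SZ q f <-> dvdr q%:R f.
Proof. by rewrite /divides_in_SZ -natz mpolyC_nat. Qed.

Section ReductionModp.
Variables (p l : nat).
Hypothesis p_pr : prime p.

Lemma natr_Fp_val (x : 'F_p) : (val x)%:R = x.
Proof.
apply: val_inj; rewrite /= val_Fp_nat // modn_small //.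
by apply: leq_trans (ltn_ord x) _; rewrite Fp_cast.
Qed.

Lemma red_modZ (c : int) (f : {mpoly int[l]}) :
  red_mod p (c *: f) = c%:~R *: red_mod p f.
Proof. exact: map_mpolyZ. Qed.

Lemma red_mod_eq0 (f : {mpoly int[l]}) : red_mod p f = 0 -> dvdr p%:R f.
Proof.
move=> f0; exists (\sum_(m <- msupp f) (f@_m %/ p)%Z *: 'X_[m]).
rewrite -mpolyC_nat natz mul_mpolyC scaler_sumr {1}(mpolyE f); apply: eq_bigr => m _.
rewrite scalerA mulrC divzK // (dvdz_pcharf (pchar_Fp p_pr)).
by move/(congr1 (mcoeff m)): f0; rewrite mcoeff0 mcoeff_map_mpoly => ->.
Qed.

Lemma red_mod_surj (g : {mpoly 'F_p[l]}) : exists f, red_mod p f = g.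
Proof.
elim/mpolyind: g => [|x m g _ _ [f <-]]; first by exists 0; rewrite raddf0.
exists ((val x)%:Z *: 'X_[m] + f).
by rewrite raddfD /= /red_mod map_mpolyZ map_mpolyX /= -pmulrn natr_Fp_val.
Qed.

Lemma pchar_mpoly_Fp_0 : (p%:R : {mpoly 'F_p[l]}) = 0.
Proof. by rewrite -mpolyC_nat pchar_Fp_0 // mpolyC0. Qed.

End ReductionModp.

Definition toQ l (f : {mpoly int[l]}) : {mpoly rat[l]} :=
  map_mpoly (fun z : int => z%:~R : rat) f.

HB.instance Definition _ (l : nat) :=
  GRing.RMorphism.copy (@toQ l) (map_mpoly (intr : int -> rat)).

Section IntegerToRational.
Variable l : nat.
Implicit Types f g h : {mpoly int[l]}.

Lemma toQZ (c : int) f : toQ (c *: f) = c%:~R *: toQ f.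
Proof. exact: map_mpolyZ. Qed.

Lemma toQ_inj : injective (@toQ l).
Proof.
move=> f g /mpolyP fg; apply/mpolyP => m.
by have := fg m; rewrite !mcoeff_map_mpoly; apply: intr_inj.
Qed.

Lemma toQ_clear_denominators (v : {mpoly rat[l]}) :
  exists2 c : int, c != 0 & exists h, c%:~R *: v = toQ h.
Proof.
elim/mpolyind: v => [|x m v _ _ [c c_nz [h vE]]].
  by exists 1 => //; exists 0; rewrite scaler0 raddf0.
exists (c * denq x); first by rewrite mulf_neq0 // denq_neq0.
exists ((c * numq x) *: 'X_[m] + denq x *: h).
rewrite [RHS]raddfD /= !toQZ -vE /toQ map_mpolyX scalerDr !scalerA.
congr (_ *: _ + _); last by rewrite rmorphM /= mulrC.
by rewrite !rmorphM /= numqE; ring.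
Qed.

Lemma hyperplaneZ (t : int) h : t != 0 -> hyperplane (t *: h) = hyperplane h.
Proof.
move=> t_nz; apply: funext => v; apply: propext.
rewrite /hyperplane -!/(toQ _) toQZ mevalZ.
split=> [/eqP|->]; last by rewrite mulr0.
by rewrite mulf_eq0 intr_eq0 (negPf t_nz) => /eqP.
Qed.

End IntegerToRational.

Section PrimitiveIntegerForm.
Variables (l : nat) (a : {mpoly int[l]}).
Hypothesis a_prim : forall q : nat, prime q -> ~ divides_in_SZ q a.

Let red_mod_neq0 q : prime q -> red_mod q a != 0.
Proof.
by move=> q_pr; apply/contra_not_neq: (a_prim q_pr) => /(red_mod_eq0 q_pr)/divides_in_SZE.
Qed.

(* Gauss' lemma: a prime q dividing c does not divide a, so it divides h. *)
Lemma dvdr_scale_cancel (c : int) f h : c != 0 -> c *: f = a * h -> dvdr a f.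
Proof.
have [N cN] := ubnP `|c|%N; elim: N => // N IH in c f h cN *.
move=> c_nz cfE; have [c_le1|c_gt1] := leqP `|c|%N 1.
  move: c_nz c_le1 cfE; case: c {cN} => [[|[|k]]|[|k]] //= _ _ cfE.
    by exists h; rewrite -cfE scale1r.
  by exists (- h); rewrite mulrN -cfE NegzE scaleN1r opprK.
pose q := pdiv `|c|; have q_pr : prime q by apply: pdiv_prime.
have q_c : (q %| c)%Z by rewrite dvdzE pdiv_dvd.
have red_h : red_mod q h = 0.
  apply: (mulfI (red_mod_neq0 q_pr)).
  rewrite mulr0 -rmorphM -cfE /= /red_mod map_mpolyZ /=.
  by move: q_c; rewrite (dvdz_pcharf (pchar_Fp q_pr)) => /eqP ->; rewrite scale0r.
have [h' hE] := red_mod_eq0 q_pr red_h.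
have cE : c = (c %/ q)%Z * q by rewrite divzK.
have c'_nz : (c %/ q)%Z != 0 by apply: contraNneq c_nz => c0; rewrite cE c0 mul0r.
apply: (IH (c %/ q)%Z _ h') => //.
- rewrite ltnS in cN; apply: leq_trans cN.
  by rewrite {2}cE abszM ltn_Pmulr ?prime_gt1 // absz_gt0.
- have q_nz : q%:R != 0 :> {mpoly int[l]}.
    by rewrite -mpolyC_nat natz mpolyC_eq0 eqz_nat gtn_eqF ?prime_gt0.
  apply: (mulfI q_nz).
  by rewrite mulrCA -hE -cfE -mpolyC_nat natz mul_mpolyC scalerA mulrC -cE.
Qed.

Lemma dvdr_toQ f : dvdr (toQ a) (toQ f) -> dvdr a f.
Proof.
move=> [v fE]; have [c c_nz [h vE]] := toQ_clear_denominators v.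
apply: (@dvdr_scale_cancel c _ h c_nz); apply: toQ_inj.
by rewrite toQZ rmorphM /= fE -vE scalerAr.
Qed.

Lemma primitive_linform_prime : linear_form a -> a != 0 -> prime_elt a.
Proof.
move=> /linear_formE aE a_nz.
have aQ_pr : prime_elt (toQ a).
  have : toQ a != 0 by rewrite raddf_eq0 //; apply: toQ_inj.
  by rewrite aE [toQ _]map_linform; apply: linform_prime.
split=> [|f g [h fgE]]; first by rewrite aE; apply: linform_ndvd1.
have [] := aQ_pr.2 (toQ f) (toQ g); first by exists (toQ h); rewrite -!rmorphM fgE.
  by move/dvdr_toQ; left.
by move/dvdr_toQ; right.
Qed.

End PrimitiveIntegerForm.

Lemma mderiv_prod (R : comNzRingType) l (I : eqType) (r : seq I)
    (F : I -> {mpoly R[l]}) j :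
  uniq r ->
  (\prod_(i <- r) F i)^`M(j) =
  \sum_(i <- r) (F i)^`M(j) * \prod_(k <- r | k != i) F k.
Proof.
elim: r => [|x r IH] /=; first by rewrite !big_nil -mpolyC1 mderivC.
case/andP=> x_r r_uniq; rewrite big_cons mderivM IH // big_cons.
rewrite [\prod_(k <- x :: r | k != x) _]big_cons eqxx /=.
rewrite [\prod_(k <- r | k != x) _]big_rmcond_in => [|i i_r]; last first.
  by rewrite negbK => /eqP i_x; move: x_r; rewrite -i_x i_r.
congr (_ + _); rewrite mulr_sumr [LHS]big_seq [RHS]big_seq; apply: eq_bigr => i i_r.
rewrite big_cons; have -> : x != i by apply: contraNneq x_r => ->.
by rewrite mulrCA.
Qed.

Section Arrangement.
Variables (l n : nat) (alpha : 'I_n -> {mpoly int[l]}).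
Hypotheses (alpha_lin : forall i, linear_form (alpha i))
  (alpha_nz : forall i, alpha i != 0)
  (alpha_hyp : forall i j, i != j -> hyperplane (alpha i) <> hyperplane (alpha j))
  (alpha_prim : forall (q : nat) i, prime q -> ~ divides_in_SZ q%:Z (alpha i)).
Implicit Types (v w : 'I_n -> {mpoly int[l]}) (f : {mpoly int[l]}).

Local Notation Q := (defpoly alpha).
Local Notation N := (in_M_plus_im alpha).

Definition acoef i j : int := (alpha i)@_U_(j).

Definition Qdel i : {mpoly int[l]} := \prod_(k < n | k != i) alpha k.

Definition psi w : {mpoly int[l]} := \sum_i w i * Qdel i.

Lemma alphaE i : alpha i = linform (acoef i).
Proof. exact: linear_formE. Qed.

Lemma mderiv_alpha i j : (alpha i)^`M(j) = (acoef i j)%:MP.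
Proof. by rewrite alphaE mderiv_linform. Qed.

Lemma Q_Qdel i : Q = alpha i * Qdel i.
Proof. by rewrite /defpoly (bigD1 i). Qed.

Lemma mderiv_Q j : Q^`M(j) = \sum_i (acoef i j)%:MP * Qdel i.
Proof.
rewrite /defpoly mderiv_prod ?index_enum_uniq //.
by apply: eq_bigr => i _; rewrite mderiv_alpha.
Qed.

Lemma eq_in_M_plus_im w v : w =1 v -> N w -> N v.
Proof. by move=> wv [c [g wE]]; exists c, g => i; rewrite -wv. Qed.

Lemma in_M_plus_imD w v : N w -> N v -> N (fun i => w i + v i).
Proof.
move=> [c [g wE]] [c' [g' vE]].
exists (fun i => c i + c' i), (fun j => g j + g' j) => i.
rewrite wE vE mulrDl; under [in RHS]eq_bigr => j _ do rewrite mulrDr.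
by rewrite big_split /=; ring.
Qed.

Lemma in_M_plus_im_M c : N (fun i => c i * alpha i).
Proof. by exists c, (fun=> 0) => i; rewrite big1 ?addr0 // => j _; rewrite mulr0. Qed.

Lemma in_M_plus_im_A g : N (fun i => \sum_j (alpha i)^`M(j) * g j).
Proof. by exists (fun=> 0), g => i; rewrite mul0r add0r. Qed.

Lemma in_M_plus_im_ord0 w : n = 0%N -> N w.
Proof.
by move=> n0; exists (fun=> 0), (fun=> 0) => i; move: (ltn_ord i); rewrite {2}n0.
Qed.

Lemma in_J_ord0 f : n = 0%N -> in_J alpha f.
Proof.
move=> n0; exists f, (fun=> 0); rewrite big1 => [|j _]; last by rewrite mul0r.
rewrite /defpoly big_pred0 => [|i]; first by rewrite mulr1 addr0.
by move: (ltn_ord i); rewrite {2}n0.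
Qed.

Lemma psiD w v : psi (fun i => w i + v i) = psi w + psi v.
Proof. by rewrite -big_split; apply: eq_bigr => i _; rewrite mulrDl. Qed.

Lemma psiB w v : psi (fun i => w i - v i) = psi w - psi v.
Proof. by rewrite -sumrB; apply: eq_bigr => i _; rewrite mulrBl. Qed.

Lemma psiMl f w : psi (fun i => f * w i) = f * psi w.
Proof. by rewrite mulr_sumr; apply: eq_bigr => i _; rewrite mulrA. Qed.

Lemma psi_M c : psi (fun i => c i * alpha i) = (\sum_i c i) * Q.
Proof. by rewrite mulr_suml; apply: eq_bigr => i _; rewrite -mulrA -Q_Qdel. Qed.

Lemma psi_A g :
  psi (fun i => \sum_j (alpha i)^`M(j) * g j) = \sum_j g j * Q^`M(j).
Proof.
rewrite /psi; under eq_bigr => i _ do rewrite big_distrl /=.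
rewrite exchange_big; apply: eq_bigr => j _; rewrite mderiv_Q mulr_sumr.
by apply: eq_bigr => i _; rewrite mderiv_alpha; ring.
Qed.

Lemma psi_in_J w : N w -> in_J alpha (psi w).
Proof.
move=> [c [g wE]]; exists (\sum_i c i), g.
by rewrite -psi_M -psi_A -psiD; apply: eq_bigr => i _; rewrite wE.
Qed.

Lemma in_J_psi (i0 : 'I_n) f : in_J alpha f -> exists2 v, N v & psi v = f.
Proof.
move=> [h [g ->]]; pose c i := if i == i0 then h else 0.
exists (fun i => c i * alpha i + \sum_j (alpha i)^`M(j) * g j).
  exact: in_M_plus_imD (in_M_plus_im_M c) (in_M_plus_im_A g).
by rewrite psiD psi_M psi_A -big_mkcond big_pred1_eq.
Qed.

Lemma alpha_prime i : prime_elt (alpha i).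
Proof.
exact: primitive_linform_prime (fun q => @alpha_prim q i) (alpha_lin i) (alpha_nz i).
Qed.

Lemma alpha_nonproportional i k (s t : int) :
  k != i -> s != 0 -> t != 0 -> s *: alpha k != t *: alpha i.
Proof.
move=> ki s_nz t_nz; apply/eqP => stE; apply: (alpha_hyp ki).
by rewrite -(hyperplaneZ _ s_nz) stE hyperplaneZ.
Qed.

Lemma alpha_ndvd i k : k != i -> ~ dvdr (alpha i) (alpha k).
Proof.
move=> ki [h kE].
have hE : h = (h@_0)%:MP.
  by apply: (@linform_dvd_const _ _ (acoef i) (acoef k)); rewrite -!alphaE.
have h0_nz : h@_0 != 0.
  by apply: contra_neq (alpha_nz k) => h0; rewrite kE {1}hE h0 mpolyC0 mulr0.
case/negP: (alpha_nonproportional ki (oner_neq0 _) h0_nz); apply/eqP.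
by rewrite scale1r kE {1}hE mulrC mul_mpolyC.
Qed.

Lemma psi_eq0 w : psi w = 0 -> N w.
Proof.
move=> w0; have /all_sig[c wE] : forall i, {c | w i = c * alpha i}.
  move=> i; apply: cid.
  have [c ->] := dvdr_cofactor_relation (alpha_prime i) (@alpha_ndvd i) w0.
  by exists c; rewrite mulrC.
exact: eq_in_M_plus_im (in_M_plus_im_M c).
Qed.

Lemma quotJ_torsion_of_coker_torsion (p : nat) :
  zero_divisor_coker p alpha -> zero_divisor_quotJ p alpha.
Proof.
move=> [w [w_notin pw_in]].
have [n0|n_gt0] := posnP n; first by case: w_notin; apply: in_M_plus_im_ord0.
exists (psi w); split; last by rewrite -psiMl; apply: psi_in_J.
case/(in_J_psi (Ordinal n_gt0)) => v v_in vE; apply: w_notin.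
have : N (fun i => (w i - v i) + v i).
  by apply: in_M_plus_imD v_in; apply: psi_eq0; rewrite psiB vE subrr.
by apply: eq_in_M_plus_im => i; rewrite subrK.
Qed.

Definition minor a m j j' : int := acoef m j * acoef a j' - acoef m j' * acoef a j.

Lemma minor_neq0 a m : m != a -> exists j j', minor a m j j' != 0.
Proof.
move=> ma; apply: contrapT => all0.
have minor0 j j' : minor a m j j' = 0.
  by apply/eqP/negPn/negP => nz; apply: all0; exists j, j'.
have [j0 aj0] : exists j0, acoef a j0 != 0 by apply: linform_coef_neq0; rewrite -alphaE.
have amE : acoef a j0 *: alpha m = acoef m j0 *: alpha a.
  rewrite !alphaE !scaler_sumr; apply: eq_bigr => j _; rewrite !scalerA; congr (_ *: _).
  by apply/eqP; rewrite mulrC -subr_eq0 -/(minor _ _ _ _) minor0.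
have mj0 : acoef m j0 != 0.
  apply: contra_neq (alpha_nz m) => m0; apply/eqP.
  by move: amE; rewrite m0 scale0r => /eqP; rewrite mscalerI (negPf aj0).
by case/negP: (alpha_nonproportional ma aj0 mj0); apply/eqP.
Qed.

Lemma in_M_plus_im_coef j0 y : N (fun m => acoef m j0 *: y).
Proof.
exists (fun=> 0), (fun j => if j == j0 then y else 0) => m.
rewrite mul0r add0r (bigD1 j0) //= eqxx big1 ?addr0 => [|j /negPf ->].
  by rewrite mderiv_alpha mul_mpolyC.
by rewrite mulr0.
Qed.

Lemma in_M_plus_im_minor x a j j' : N (fun m => minor a m j j' *: x).
Proof.
have := in_M_plus_imD (in_M_plus_im_coef j (acoef a j' *: x))
                      (in_M_plus_im_coef j' (- (acoef a j *: x))).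
by apply: eq_in_M_plus_im => m; rewrite scalerN !scalerA -scalerBl.
Qed.

Section ModP.
Variable p : nat.
Hypothesis p_pr : prime p.

Local Notation red := (@red_mod p l).

Let natp_neq0 : p%:R != 0 :> {mpoly int[l]}.
Proof. by rewrite -mpolyC_nat natz mpolyC_eq0 eqz_nat gtn_eqF ?prime_gt0. Qed.

Let natpX_neq0 e : p%:Z ^+ e != 0.
Proof. by rewrite expf_neq0 // eqz_nat gtn_eqF ?prime_gt0. Qed.

Definition rcoef i j : 'F_p := (acoef i j)%:~R.

Lemma red_alphaE i : red (alpha i) = linform (rcoef i).
Proof. by rewrite alphaE [red _]map_linform. Qed.

Lemma red_alpha_neq0 i : red (alpha i) != 0.
Proof.
by apply/contra_not_neq: (@alpha_prim p i p_pr) => /(red_mod_eq0 p_pr)/divides_in_SZE.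
Qed.

Lemma red_alpha_prime i : prime_elt (red (alpha i)).
Proof.
by rewrite red_alphaE; apply: linform_prime; rewrite -red_alphaE red_alpha_neq0.
Qed.

Lemma red_Q_neq0 : red Q != 0.
Proof. by rewrite rmorph_prod; apply/prodf_neq0 => i _; apply: red_alpha_neq0. Qed.

Definition proportional_mod e a m :=
  exists d : int, forall j, ((p%:Z) ^+ e %| acoef m j - d * acoef a j)%Z.

Lemma proportional_modW e e' a m :
  (e' <= e)%N -> proportional_mod e a m -> proportional_mod e' a m.
Proof.
by move=> e'_le [d dE]; exists d => j; apply: dvdz_trans (dE j); apply: dvdz_exp2l.
Qed.

Lemma proportional_mod1P a m :
  proportional_mod 1 a m <-> exists d : 'F_p, forall j, rcoef m j = d * rcoef a j.
Proof.
have modpE (z : int) : (p%:Z ^+ 1 %| z)%Z = (z%:~R == 0 :> 'F_p).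
  by rewrite expr1 (dvdz_pcharf (pchar_Fp p_pr)).
split=> [[d dE]|[d dE]].
  by exists d%:~R => j; apply/eqP; rewrite -subr_eq0 -intrM -intrB -modpE.
exists (val d)%:Z => j; rewrite modpE intrB intrM -pmulrn natr_Fp_val //.
by rewrite -!/(rcoef _ _) dE subrr.
Qed.

Lemma proportional_mod_of_dvdr a m :
  dvdr (red (alpha a)) (red (alpha m)) -> proportional_mod 1 a m.
Proof.
move=> [h mE]; apply/proportional_mod1P; exists h@_0 => j.
have hE : h = (h@_0)%:MP.
  apply: (@linform_dvd_const _ _ (rcoef a) (rcoef m)).
    by rewrite -red_alphaE red_alpha_neq0.
  by rewrite -!red_alphaE.
move/(congr1 (mcoeff U_(j))): mE; rewrite [h in _ * h]hE mulrC mul_mpolyC mcoeffZ.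
by rewrite !red_alphaE !mcoeff_linformU.
Qed.

Lemma psi_decomp_mod f v d u : psi v = p%:R * f ->
  (forall i, v i = d i * alpha i + p%:R * u i) -> exists s, f = s * Q + psi u.
Proof.
move=> vE dE; have pfE : p%:R * f = (\sum_i d i) * Q + p%:R * psi u.
  by rewrite -vE -psi_M -psiMl -psiD; apply: eq_bigr => i _; rewrite dE.
have [|s sE] := @red_mod_eq0 p l p_pr (\sum_i d i).
  apply: (mulIf red_Q_neq0).
  rewrite mul0r -rmorphM -(addrK (p%:R * psi u) (_ * Q)) -pfE.
  by rewrite -mulrBr rmorphM rmorph_nat pchar_mpoly_Fp_0 // mul0r.
by exists s; apply: (mulfI natp_neq0); rewrite pfE sE mulrDr mulrA.
Qed.

Section NonProportional.
Hypothesis nonproportional : forall a m, a != m -> ~ proportional_mod 1 a m.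

Lemma red_psi_eq0 v : red (psi v) = 0 ->
  exists d u, forall i, v i = d i * alpha i + p%:R * u i.
Proof.
move=> psi0; suff /fin_all_exists[du duE] : forall i,
    exists du : _ * _, v i = du.1 * alpha i + p%:R * du.2.
  by exists (fun i => (du i).1), (fun i => (du i).2).
move=> i; have [||b vE] :=
  @dvdr_cofactor_relation _ _ (fun k => red (alpha k)) (red \o v) i (red_alpha_prime i).
- by move=> k ki /proportional_mod_of_dvdr; apply: nonproportional; rewrite eq_sym.
- apply: etrans psi0; rewrite rmorph_sum.
  by apply: eq_bigr => k _; rewrite rmorphM rmorph_prod.
have [d dE] := red_mod_surj p_pr b.
have [|u uE] := @red_mod_eq0 p l p_pr (v i - d * alpha i).
  by rewrite rmorphB rmorphM /= dE mulrC -vE subrr.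
by exists (d, u); rewrite -uE addrC subrK.
Qed.

Lemma coker_torsion_of_quotJ_torsion :
  zero_divisor_quotJ p alpha -> zero_divisor_coker p alpha.
Proof.
move=> [f [f_notin pf_in]].
have [n0|n_gt0] := posnP n; first by case: f_notin; apply: in_J_ord0.
pose i0 := Ordinal n_gt0; have [v v_in vE] := in_J_psi i0 pf_in.
have [d [u vE']] : exists d u, forall i, v i = d i * alpha i + p%:R * u i.
  by apply: red_psi_eq0; rewrite vE rmorphM rmorph_nat pchar_mpoly_Fp_0 // mul0r.
have [s fE] := psi_decomp_mod vE vE'.
pose c i := if i == i0 then s else 0.
exists (fun i => u i + c i * alpha i); split.
  by move/psi_in_J; rewrite psiD psi_M -big_mkcond big_pred1_eq addrC -fE.
pose c' i := p%:R * c i - d i.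
apply: eq_in_M_plus_im (in_M_plus_imD (in_M_plus_im_M c') v_in) => i.
by rewrite /c' vE'; ring.
Qed.

End NonProportional.

Lemma coker_torsion_of_pow e w :
  ~ N w -> N (fun i => p%:R ^+ e * w i) -> zero_divisor_coker p alpha.
Proof.
elim: e w => [|e IH] w w_notin pw_in.
  by case: w_notin; apply: eq_in_M_plus_im pw_in => i; rewrite expr0 mul1r.
have [pw1_in|pw1_notin] := EM (N (fun i => p%:R * w i)); first by exists w.
by apply: (IH _ pw1_notin); apply: eq_in_M_plus_im pw_in => i; rewrite exprSr mulrA.
Qed.

Lemma proportional_mod_dvd_minor e a m j j' :
  proportional_mod e a m -> (p%:Z ^+ e %| minor a m j j')%Z.
Proof.
move=> [d dE]; have -> : minor a m j j' =
    (acoef m j - d * acoef a j) * acoef a j' - (acoef m j' - d * acoef a j') * acoef a j.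
  by rewrite /minor; move: (acoef m j) (acoef m j') (acoef a j) (acoef a j') => *; ring.
by rewrite rpredB // dvdz_mulr.
Qed.

Lemma proportional_mod_bounded a m :
  m != a -> exists B, forall e, proportional_mod e a m -> (e < B)%N.
Proof.
move=> ma; have [j [j' minor_nz]] := minor_neq0 ma.
exists `|minor a m j j'|%N => e /(proportional_mod_dvd_minor j j').
rewrite dvdzE abszX /= => /dvdn_leq; rewrite absz_gt0 minor_nz => /(_ isT).
exact/leq_trans/ltn_expl/prime_gt1.
Qed.

Lemma proportional_mod_succ e a k :
  proportional_mod e a k -> (forall j j', (p%:Z ^+ e.+1 %| minor a k j j')%Z) ->
  proportional_mod e.+1 a k.
Proof.
move=> [d dE] minor_dvd; pose P : int := p%:Z ^+ e; have P_nz := natpX_neq0 e.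
have modpE (z : int) : (p%:Z %| z)%Z = (z%:~R == 0 :> 'F_p).
  by rewrite (dvdz_pcharf (pchar_Fp p_pr)).
have [j0 aj0] : exists j0, rcoef a j0 != 0.
  by apply: linform_coef_neq0; rewrite -red_alphaE red_alpha_neq0.
pose b j := ((acoef k j - d * acoef a j) %/ P)%Z.
have kE j : acoef k j = d * acoef a j + b j * P by rewrite divzK // addrC subrK.
have bE j j' : (b j)%:~R * rcoef a j' = (b j')%:~R * rcoef a j :> 'F_p.
  have : (p%:Z %| b j * acoef a j' - b j' * acoef a j)%Z.
    rewrite -(dvdz_mul2l P_nz) -exprSr.
    have := minor_dvd j j'; rewrite /minor !kE; congr (_ %| _)%Z.
    by move: (b j) (b j') (acoef a j) (acoef a j') => *; ring.
  by rewrite modpE intrB !intrM subr_eq0 => /eqP.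
pose t : 'F_p := (b j0)%:~R / rcoef a j0.
exists (d + P * (val t)%:Z) => j.
have -> : acoef k j - (d + P * (val t)%:Z) * acoef a j =
          P * (b j - (val t)%:Z * acoef a j).
  by rewrite kE; move: (b j) (acoef a j) ((val t)%:Z) => *; ring.
rewrite exprSr dvdz_mul2l // modpE intrB intrM -pmulrn natr_Fp_val // -/(rcoef a j).
by rewrite subr_eq0; apply/eqP/(mulIf aj0); rewrite bE /t mulrAC divfK.
Qed.

Lemma red_in_M_plus_im_proportional w a k (delta : 'F_p) :
  N w -> (forall j, rcoef k j = delta * rcoef a j) ->
  dvdr (red (alpha a)) (red (w k) - delta%:MP * red (w a)).
Proof.
move=> [c [g wE]] kE.
have redS m : red (\sum_j (alpha m)^`M(j) * g j) = \sum_j rcoef m j *: red (g j).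
  rewrite rmorph_sum; apply: eq_bigr => j _.
  by rewrite mderiv_alpha mul_mpolyC; apply: map_mpolyZ.
have red_k : red (alpha k) = delta%:MP * red (alpha a).
  rewrite !red_alphaE mul_mpolyC scaler_sumr; apply: eq_bigr => j _.
  by rewrite kE scalerA.
exists (delta%:MP * (red (c k) - red (c a))).
rewrite !wE !rmorphD !rmorphM /= !redS red_k.
have -> : \sum_j rcoef k j *: red (g j) = delta%:MP * \sum_j rcoef a j *: red (g j).
  by rewrite mul_mpolyC scaler_sumr; apply: eq_bigr => j _; rewrite kE scalerA.
by move: (red (c k)) (red (c a)) (red (alpha a)) (delta%:MP) (\sum_j _) => *; ring.
Qed.

Section TorsionWitness.
Variables (a k : 'I_n) (e : nat) (j j' : 'I_l).
Hypotheses (e_gt0 : (0 < e)%N)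
  (prop_closed : forall m, m != a -> proportional_mod 1 a m -> proportional_mod e a m)
  (prop_k : proportional_mod e a k)
  (minor_k : ~~ (p%:Z ^+ e.+1 %| minor a k j j')%Z).

(* On the class G of the forms proportional to alpha_a modulo p^e, w_m is
   R * minor_m / p^e, where R is the product of the alpha_m outside G.  Modulo M,
   p^e w is the image of R (a_j' e_j - a_j e_j') under A.  Reducing mod p a
   decomposition of w itself would make alpha_a divide R * minor_k / p^e mod p,
   hence some alpha_m outside G, which then lies in G by [prop_closed]. *)
Let P : int := p%:Z ^+ e.
Let in_class m : bool := `[< proportional_mod e a m >].
Let prod_out : {mpoly int[l]} := \prod_(m | ~~ in_class m) alpha m.
Let w m := if in_class m then (minor a m j j' %/ P)%Z *: prod_out else 0.

Let pow_w_in : N (fun m => p%:R ^+ e * w m).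
Proof.
pose c m := if in_class m then 0
            else - (minor a m j j' *: \prod_(m' | ~~ in_class m' && (m' != m)) alpha m').
have := in_M_plus_imD (in_M_plus_im_M c) (in_M_plus_im_minor prod_out a j j').
apply: eq_in_M_plus_im => m; rewrite /w /c; case: ifPn => [/asboolP Gm|nGm].
  rewrite mul0r add0r -mpolyC_nat natz -rmorphXn mul_mpolyC scalerA mulrC divzK //.
  exact: proportional_mod_dvd_minor.
rewrite mulr0 /prod_out [X in _ + _ *: X](bigD1 m) //= mulNr -scalerAl.
by rewrite [_ * alpha m]mulrC addNr.
Qed.

Let w_notin : ~ N w.
Proof.
move=> w_in.
have aG : in_class a by apply/asboolP; exists 1 => jj; rewrite mul1r subrr dvdz0.
have kG : in_class k by apply/asboolP.
have [delta kE] := (proportional_mod1P a k).1 (proportional_modW e_gt0 prop_k).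
have := red_in_M_plus_im_proportional w_in kE.
have minor_aa : minor a a j j' = 0 by rewrite /minor mulrC subrr.
rewrite /w aG kG minor_aa div0z scale0r rmorph0 mulr0 subr0.
have b_nz : ((minor a k j j' %/ P)%Z%:~R : 'F_p) != 0.
  apply: contra minor_k; rewrite -(dvdz_pcharf (pchar_Fp p_pr)) => p_b.
  rewrite -(divzK (proportional_mod_dvd_minor j j' prop_k)) -/P exprSr.
  by rewrite [X in (_ %| X)%Z]mulrC dvdz_mul2l ?natpX_neq0.
rewrite red_modZ -mul_mpolyC; case/(red_alpha_prime a).2.
  by rewrite red_alphaE => /linform_dvdrC/eqP; apply/negP.
rewrite rmorph_prod => /(prime_dvdr_prod (red_alpha_prime a)) [m nGm].
move/proportional_mod_of_dvdr => prop1; have m_a : m != a by apply: contraNneq nGm => ->.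
by case/negP: nGm; apply/asboolP; apply: prop_closed.
Qed.

Lemma coker_torsion_of_minor : zero_divisor_coker p alpha.
Proof. exact: coker_torsion_of_pow w_notin pow_w_in. Qed.

End TorsionWitness.

(* Without p-torsion, [coker_torsion_of_minor] would keep the forms that are
   proportional to alpha_a mod p proportional modulo every power of p, which the
   nonzero minors forbid. *)
Lemma coker_torsion_of_proportional a k :
  a != k -> proportional_mod 1 a k -> zero_divisor_coker p alpha.
Proof.
move=> a_k prop1; apply: contrapT => no_torsion.
have closed e : (0 < e)%N ->
    forall m, m != a -> proportional_mod 1 a m -> proportional_mod e a m.
  elim: e => // e IH _ m m_a prop1m; have [-> //|e_gt0] := posnP e.
  apply: contrapT => not_succ; have {}IH := IH e_gt0.
  have [j [j' minor_m]] : exists j j', ~~ (p%:Z ^+ e.+1 %| minor a m j j')%Z.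
    apply: contrapT => all_dvd; apply/not_succ/proportional_mod_succ => [|j j'].
      exact: IH.
    by apply/negPn/negP => ndvd; apply: all_dvd; exists j, j'.
  exact: no_torsion (coker_torsion_of_minor e_gt0 IH (IH m m_a prop1m) minor_m).
have k_a : k != a by rewrite eq_sym.
have [B bound] := proportional_mod_bounded k_a.
by have := bound B.+1 (closed B.+1 isT k k_a prop1); rewrite ltnNge leqnSn.
Qed.

End ModP.

End Arrangement.

Unset Implicit Arguments.

Theorem proposition4p9 (l n : nat) (alpha : 'I_n -> {mpoly int[l]}) (p : nat) :
  (* each alpha_i is a nonzero linear form (so H_i is a hyperplane through 0) *)
  (forall i, linear_form (alpha i)) ->
  (forall i, alpha i != 0) ->
  (* the hyperplanes are pairwise distinct *)
  (forall i j, i != j -> hyperplane (alpha i) <> hyperplane (alpha j)) ->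
  (* no prime number divides any alpha_i *)
  (forall (q : nat) i, prime q -> ~ divides_in_SZ q%:Z (alpha i)) ->
  prime p ->
  good_prime p alpha ->
  (zero_divisor_quotJ p alpha <-> zero_divisor_coker p alpha).
Proof.
move=> lin nz hyp prim p_pr _.
split; last exact: quotJ_torsion_of_coker_torsion.
have [[a [k [a_k prop1]]] _|nonprop] :=
  EM (exists a k, a != k /\ proportional_mod alpha p 1 a k).
  exact: coker_torsion_of_proportional prop1.
apply: coker_torsion_of_quotJ_torsion => // a k a_k prop1.
by apply: nonprop; exists a, k.
Qed.
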